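(* Let $C$ be a linear code over $\mathbb{Z}_4+u\mathbb{Z}_4$ generated by a matrix of the form $[I_n\,|\,A]$, where $A$ is an $n\times n$ matrix over $\mathbb{Z}_4+u\mathbb{Z}_4$. If $A$ is symmetric or circulant, then $C$ is formally self-dual, and hence $\phi(C)$ is a formally self-dual code over $\mathbb{Z}_4$ of length $4n$.
   Context: $\mathbb{Z}_4+u\mathbb{Z}_4$ is the commutative ring of characteristic $4$ with $u^2=0$. A linear code over a ring $R$ is an $R$-submodule of $R^N$; duals are taken with respect to the Euclidean inner product $\sum_i x_iy_i$ in $R$. Lee weight on $\mathbb{Z}_4$: $0,1,2,1$ for $0,1,2,3$; on $\mathbb{Z}_4+u\mathbb{Z}_4$: $w_L(a+ub)=w_L(b)+w_L(a+b)$; extended additively to vectors. A linear code (over either ring) is formally self-dual if it has the same Lee weight enumerator as its dual. The Gray map $\phi:(\mathbb{Z}_4+u\mathbb{Z}_4)^{N}\to\mathbb{Z}_4^{2N}$ is $\phi(\overline{a}+u\overline{b})=(\overline{b},\overline{a}+\overline{b})$ for $\overline{a},\overline{b}\in\mathbb{Z}_4^N$. A circulant matrix is one in which each row is the cyclic right shift of the previous row. *)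

From HB Require Import structures.
From mathcomp Require Import all_boot all_order all_algebra.
From mathcomp Require Import ring.
Set Implicit Arguments. Unset Strict Implicit. Unset Printing Implicit Defensive.
Import GRing.Theory.
Local Open Scope ring_scope.

(* The ring Z4 + u Z4 (u^2 = 0): the element a + u b is the pair (a,b). *)
Definition Z4u : Type := ('Z_4 * 'Z_4)%type.
HB.instance Definition _ := Finite.copy Z4u ('Z_4 * 'Z_4)%type.
HB.instance Definition _ := GRing.Zmodule.copy Z4u ('Z_4 * 'Z_4)%type.

Definition z4u_one : Z4u := (1, 0).
(* (a + u b)(c + u d) = ac + u (ad + bc) *)
Definition z4u_mul (x y : Z4u) : Z4u := (x.1 * y.1, x.1 * y.2 + x.2 * y.1).

Lemma z4u_mulA : associative z4u_mul.
Proof.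
move=> [a b] [c d] [e f]; rewrite /z4u_mul; cbn [fst snd].
have h1 : a * (c * e) = a * c * e :> 'Z_4 by ring.
have h2 : a * (c * f + d * e) + b * (c * e) = a * c * f + (a * d + b * c) * e :> 'Z_4 by ring.
by rewrite h1 h2.
Qed.
Lemma z4u_mulC : commutative z4u_mul.
Proof.
move=> [a b] [c d]; rewrite /z4u_mul; cbn [fst snd].
have h1 : a * c = c * a :> 'Z_4 by ring.
have h2 : a * d + b * c = c * b + d * a :> 'Z_4 by ring.
by rewrite h1 h2.
Qed.
Lemma z4u_mul1 : left_id z4u_one z4u_mul.
Proof.
move=> [a b]; rewrite /z4u_mul /z4u_one; cbn [fst snd].
have h1 : 1 * a = a :> 'Z_4 by ring.
have h2 : 1 * b + 0 * a = b :> 'Z_4 by ring.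
by rewrite h1 h2.
Qed.
Lemma z4u_mulDl : left_distributive z4u_mul +%R.
Proof.
move=> [a b] [c d] [e f]; rewrite /z4u_mul; cbn [fst snd].
have h1 : (a + c) * e = a * e + c * e :> 'Z_4 by ring.
have h2 : (a + c) * f + (b + d) * e = (a * f + b * e) + (c * f + d * e) :> 'Z_4 by ring.
by rewrite h1 h2.
Qed.
Lemma z4u_one_neq0 : z4u_one != 0.
Proof. by []. Qed.

HB.instance Definition _ := GRing.Zmodule_isComNzRing.Build Z4u
  z4u_mulA z4u_mulC z4u_mul1 z4u_mulDl z4u_one_neq0.

Definition uZ4u : Z4u := (0, 1).
Definition mkZ4u (a b : 'Z_4) : Z4u := (a, b).

Section Codes.
Variable R : finComNzRingType.

Definition linear_code (N : nat) (C : {set 'rV[R]_N}) : Prop :=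
  [/\ 0 \in C,
      (forall x y, x \in C -> y \in C -> x + y \in C) &
      (forall (a : R) x, x \in C -> a *: x \in C)].

Definition euclid (N : nat) (x y : 'rV[R]_N) : R := \sum_(i < N) x ord0 i * y ord0 i.

Definition dual_code (N : nat) (C : {set 'rV[R]_N}) : {set 'rV[R]_N} :=
  [set y | [forall c in C, euclid c y == 0]].

Definition weight_enum (N : nat) (wt : 'rV[R]_N -> nat) (C : {set 'rV[R]_N})
  : {poly int} := \sum_(c in C) 'X^(wt c).

Definition formally_self_dual (N : nat) (wt : 'rV[R]_N -> nat)
  (C : {set 'rV[R]_N}) : Prop :=
  linear_code C /\ weight_enum wt C = weight_enum wt (dual_code C).

Definition gen_code (k N : nat) (G : 'M[R]_(k, N)) : {set 'rV[R]_N} :=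
  [set x *m G | x : 'rV[R]_k].
End Codes.

Definition leeZ4 (x : 'Z_4) : nat := minn (val x) (4 - val x).
Definition leeZ4u (x : Z4u) : nat := leeZ4 x.2 + leeZ4 (x.1 + x.2).

Definition leeZ4_vec (N : nat) (v : 'rV['Z_4]_N) : nat := \sum_(i < N) leeZ4 (v ord0 i).
Definition leeZ4u_vec (N : nat) (v : 'rV[Z4u]_N) : nat := \sum_(i < N) leeZ4u (v ord0 i).

Definition gray (N : nat) (v : 'rV[Z4u]_N) : 'rV['Z_4]_(N + N) :=
  row_mx (\row_i (v ord0 i).2) (\row_i ((v ord0 i).1 + (v ord0 i).2)).

Definition circulant (R : Type) (n : nat) (A : 'M[R]_n) : Prop :=
  forall (i j : 'I_n) (Hi : (i.+1 < n)%N), A (Ordinal Hi) j = A i (ord_pred j).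

From HB Require Import structures.
From mathcomp Require Import all_boot all_algebra fingroup perm ring zify.
Import GRing.Theory.
Set Implicit Arguments. Unset Strict Implicit. Unset Printing Implicit Defensive.
Local Open Scope ring_scope.

(* The code C generated by [I | A] has dual {(-y A^T, y)}.  If P is a
   permutation matrix with P^2 = 1 and A P = P A^T -- the identity when A is
   symmetric, the order-reversing permutation when A is circulant, because
   then A_(i, n-1-j) = A_(j, n-1-i) -- then (x, y) |-> (-yP, xP) maps C onto
   its dual, and it preserves Lee weight since Lee weight is invariant under
   negation and permutation of coordinates.  For the Gray image, if
   <c, z> = a + ub then <phi(c), phi(sigma z)> = a + b, where sigma is the
   automorphism u |-> 2 - u; testing against both c and uc gives
   phi(C)^perp = phi(sigma(C^perp)), and phi, sigma preserve Lee weight. *)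

Lemma weight_enum_imset (R1 R2 : finComNzRingType) N1 N2
    (f : 'rV[R1]_N1 -> 'rV[R2]_N2) (wt1 : 'rV[R1]_N1 -> nat) (wt2 : 'rV[R2]_N2 -> nat)
    (C : {set 'rV[R1]_N1}) :
  injective f -> (forall v, wt2 (f v) = wt1 v) ->
  weight_enum wt2 (f @: C) = weight_enum wt1 C.
Proof.
move=> f_inj f_wt; rewrite /weight_enum big_imset /=; last by move=> x y _ _ /f_inj.
by apply: eq_bigr => v _; rewrite f_wt.
Qed.

Section SystematicCodes.
Variable R : finComNzRingType.

Lemma euclidE N (x y : 'rV[R]_N) : euclid x y = (x *m y^T) ord0 ord0.
Proof. by rewrite /euclid mxE; apply: eq_bigr => i _; rewrite mxE. Qed.

Lemma euclid_row_mx N1 N2 (a c : 'rV[R]_N1) (b d : 'rV[R]_N2) :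
  euclid (row_mx a b) (row_mx c d) = euclid a c + euclid b d.
Proof.
by rewrite /euclid big_split_ord; congr (_ + _); apply: eq_bigr => i _;
  rewrite ?row_mxEl ?row_mxEr.
Qed.

Lemma euclidZl N (a : R) (x y : 'rV[R]_N) : euclid (a *: x) y = a * euclid x y.
Proof. by rewrite /euclid mulr_sumr; apply: eq_bigr => i _; rewrite mxE mulrA. Qed.

Lemma gen_codeP k N (G : 'M[R]_(k, N)) c :
  reflect (exists x, c = x *m G) (c \in gen_code G).
Proof. by apply: (iffP imsetP) => [[x _ ->]|[x ->]]; exists x. Qed.

Lemma gen_code_linear k N (G : 'M[R]_(k, N)) : linear_code (gen_code G).
Proof.
split.
- by apply/gen_codeP; exists 0; rewrite mul0mx.
- move=> _ _ /gen_codeP[x ->] /gen_codeP[y ->].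
  by apply/gen_codeP; exists (x + y); rewrite mulmxDl.
- by move=> a _ /gen_codeP[x ->]; apply/gen_codeP; exists (a *: x); rewrite scalemxAl.
Qed.

Lemma cV_eq0P k (V : 'cV[R]_k) :
  reflect (forall x : 'rV_k, (x *m V) ord0 ord0 = 0) (V == 0).
Proof.
apply: (iffP eqP) => [-> x | V0]; first by rewrite mulmx0 mxE.
by apply/matrixP => j i; rewrite (ord1 i) [RHS]mxE -(V0 'e_j) -rowE mxE.
Qed.

Lemma dual_systematic n (A : 'M[R]_n) y :
  (y \in dual_code (gen_code (row_mx 1%:M A))) = (lsubmx y == - (rsubmx y *m A^T)).
Proof.
have -> : (lsubmx y == - (rsubmx y *m A^T)) = (row_mx 1%:M A *m y^T == 0).
  rewrite -addr_eq0 -(inj_eq (@trmx_inj _ _ _)) trmx0 -[y in RHS]hsubmxK.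
  by rewrite tr_row_mx mul_row_col mul1mx linearD /= trmx_mul !trmxK.
rewrite inE; apply/forall_inP/cV_eq0P => [y_dual x | G0 _ /gen_codeP[x ->]].
  by apply/eqP; rewrite mulmxA -euclidE y_dual //; apply/gen_codeP; exists x.
by rewrite euclidE -mulmxA G0.
Qed.

Definition dual_twist n (P : 'M[R]_n) (v : 'rV[R]_(n + n)) : 'rV[R]_(n + n) :=
  row_mx (- (rsubmx v *m P)) (lsubmx v *m P).

Section Involution.
Variables (n : nat) (P : 'M[R]_n).
Hypothesis P_invol : P *m P = 1%:M.

Lemma dual_twistK v : dual_twist P (dual_twist P v) = - v.
Proof.
rewrite /dual_twist !row_mxKl !row_mxKr mulNmx -!mulmxA P_invol !mulmx1.
by rewrite -opp_row_mx hsubmxK.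
Qed.

Lemma dual_twist_inj : injective (dual_twist P).
Proof. by move=> v w /(congr1 (dual_twist P)); rewrite !dual_twistK => /oppr_inj. Qed.

Lemma dual_systematicE (A : 'M[R]_n) : A *m P = P *m A^T ->
  dual_code (gen_code (row_mx 1%:M A)) = dual_twist P @: gen_code (row_mx 1%:M A).
Proof.
move=> AP; apply/setP => y; rewrite dual_systematic; apply/eqP/imsetP.
- move=> yl; exists (rsubmx y *m P *m row_mx 1%:M A).
    by apply/gen_codeP; exists (rsubmx y *m P).
  rewrite /dual_twist mul_mx_row mulmx1 row_mxKl row_mxKr -[y in LHS]hsubmxK yl.
  by rewrite -!mulmxA AP !mulmxA -(mulmxA _ P P) P_invol mulmx1.
- move=> [_ /gen_codeP[x ->] ->].
  by rewrite /dual_twist mul_mx_row mulmx1 !row_mxKl !row_mxKr -!mulmxA AP.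
Qed.

Lemma formally_self_dual_systematic (A : 'M[R]_n) (wt : 'rV[R]_(n + n) -> nat) :
  A *m P = P *m A^T -> (forall v, wt (dual_twist P v) = wt v) ->
  formally_self_dual wt (gen_code (row_mx 1%:M A)).
Proof.
move=> AP wt_twist; split; first exact: gen_code_linear.
by rewrite dual_systematicE // (weight_enum_imset _ dual_twist_inj wt_twist).
Qed.

End Involution.
End SystematicCodes.

Lemma leeZ4N (x : 'Z_4) : leeZ4 (- x) = leeZ4 x.
Proof. by case: x => [[|[|[|[|k]]]] ?]. Qed.

Lemma leeZ4uN (x : Z4u) : leeZ4u (- x) = leeZ4u x.
Proof. by case: x => a b; rewrite /leeZ4u /= -opprD !leeZ4N. Qed.

Lemma leeZ4_vec_row_mx N1 N2 (a : 'rV['Z_4]_N1) (b : 'rV['Z_4]_N2) :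
  leeZ4_vec (row_mx a b) = (leeZ4_vec a + leeZ4_vec b)%N.
Proof.
by rewrite /leeZ4_vec big_split_ord; congr addn; apply: eq_bigr => i _;
  rewrite ?row_mxEl ?row_mxEr.
Qed.

Lemma leeZ4u_vec_row_mx N1 N2 (a : 'rV[Z4u]_N1) (b : 'rV[Z4u]_N2) :
  leeZ4u_vec (row_mx a b) = (leeZ4u_vec a + leeZ4u_vec b)%N.
Proof.
by rewrite /leeZ4u_vec big_split_ord; congr addn; apply: eq_bigr => i _;
  rewrite ?row_mxEl ?row_mxEr.
Qed.

Lemma leeZ4u_vecN N (v : 'rV[Z4u]_N) : leeZ4u_vec (- v) = leeZ4u_vec v.
Proof. by apply: eq_bigr => i _; rewrite mxE leeZ4uN. Qed.

Lemma leeZ4u_vec_perm N (s : 'S_N) (v : 'rV[Z4u]_N) :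
  leeZ4u_vec (v *m perm_mx s) = leeZ4u_vec v.
Proof.
rewrite -[s]invgK -col_permE /leeZ4u_vec [RHS](reindex_inj (@perm_inj _ s^-1)).
by apply: eq_bigr => i _; rewrite mxE.
Qed.

Lemma leeZ4u_vec_dual_twist n (s : 'S_n) (v : 'rV[Z4u]_(n + n)) :
  leeZ4u_vec (dual_twist (perm_mx s) v) = leeZ4u_vec v.
Proof.
rewrite /dual_twist leeZ4u_vec_row_mx leeZ4u_vecN !leeZ4u_vec_perm.
by rewrite -[in RHS](hsubmxK v) leeZ4u_vec_row_mx addnC.
Qed.

Section Circulant.
Variable R : pzSemiRingType.

Lemma circulantE m (A : 'M[R]_m.+1) : circulant A ->
  forall i j : 'I_m.+1, A i j = A ord0 (inZp (j + (m.+1 - i))).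
Proof.
move=> cA [i lt_i_m]; elim: i lt_i_m => [|i IHi] lt_i_m j.
  by congr (A _ _); apply: val_inj; rewrite //= subn0 modnDr modn_small.
rewrite (cA (Ordinal (ltnW lt_i_m))) IHi; congr (A _ _); apply: val_inj => /=.
rewrite modnDml -(modnDr (j + (m.+1 - i.+1))); congr modn.
by move: lt_i_m; have := ltn_ord j; lia.
Qed.

Lemma circulant_rev_sym n (A : 'M[R]_n) : circulant A ->
  forall i j : 'I_n, A i (rev_ord j) = A j (rev_ord i).
Proof.
case: n A => [|m] A cA i j; first by case: i.
rewrite (circulantE cA i) (circulantE cA j); congr (A _ _); apply: val_inj => /=.
by congr modn; have := ltn_ord j; have := ltn_ord i; lia.
Qed.

Definition rev_perm n : 'S_n := perm (@rev_ord_inj n).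

Lemma rev_permK n : (rev_perm n * rev_perm n = 1)%g.
Proof. by apply/permP => i; rewrite perm1 permM !permE rev_ordK. Qed.

Lemma circulant_mul_rev_perm n (A : 'M[R]_n) : circulant A ->
  A *m perm_mx (rev_perm n) = perm_mx (rev_perm n) *m A^T.
Proof.
have rev_permV : ((rev_perm n)^-1 = rev_perm n)%g.
  by rewrite -[LHS]mulg1 -(rev_permK n) mulKg.
move=> cA; rewrite -row_permE -{1}rev_permV -col_permE.
by apply/matrixP => i j; rewrite !mxE !permE circulant_rev_sym.
Qed.

End Circulant.

(* The ring automorphism a + ub |-> a + (2 - u) b. *)
Definition z4u_conj (x : Z4u) : Z4u := (x.1 + x.2 + x.2, - x.2).

Lemma z4u_conjK : involutive z4u_conj.
Proof. by case=> a b; rewrite /z4u_conj /= opprK; congr (_, _); ring. Qed.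

Lemma leeZ4u_conj (x : Z4u) : leeZ4u (z4u_conj x) = leeZ4u x.
Proof. by case: x => a b; rewrite /leeZ4u /= leeZ4N addrK. Qed.

Lemma map_mx_z4u_conjK m n : involutive (@map_mx _ _ z4u_conj m n).
Proof. by move=> M; apply/matrixP => i j; rewrite !mxE z4u_conjK. Qed.

Lemma leeZ4u_vec_conj N (v : 'rV[Z4u]_N) :
  leeZ4u_vec (map_mx z4u_conj v) = leeZ4u_vec v.
Proof. by apply: eq_bigr => i _; rewrite mxE leeZ4u_conj. Qed.

Definition ungray N (y : 'rV['Z_4]_(N + N)) : 'rV[Z4u]_N :=
  \row_i (mkZ4u (rsubmx y ord0 i - lsubmx y ord0 i) (lsubmx y ord0 i)).

Lemma grayK N : cancel (@gray N) (@ungray N).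
Proof.
move=> c; apply/rowP => i; rewrite /ungray /gray mxE row_mxKl row_mxKr !mxE addrK.
by case: (c ord0 i).
Qed.

Lemma ungrayK N : cancel (@ungray N) (@gray N).
Proof.
move=> y; rewrite -[RHS]hsubmxK /gray; congr row_mx; apply/rowP => i; rewrite !mxE //=.
by rewrite subrK.
Qed.

Lemma leeZ4_vec_gray N (c : 'rV[Z4u]_N) : leeZ4_vec (gray c) = leeZ4u_vec c.
Proof.
rewrite /gray leeZ4_vec_row_mx /leeZ4_vec -big_split /=.
by apply: eq_bigr => i _; rewrite !mxE.
Qed.

Lemma gray0 N : gray (0 : 'rV[Z4u]_N) = 0.
Proof.
by rewrite /gray -row_mx0; congr row_mx; apply/rowP => i; rewrite !mxE /= ?addr0.
Qed.

Lemma grayD N : {morph @gray N : x y / x + y}.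
Proof.
move=> x y; rewrite /gray add_row_mx; congr row_mx; apply/rowP => i; rewrite !mxE //=.
by rewrite addrACA.
Qed.

Lemma grayZ N (a : 'Z_4) (c : 'rV[Z4u]_N) : a *: gray c = gray (mkZ4u a 0 *: c).
Proof.
rewrite /gray scale_row_mx; congr row_mx; apply/rowP => i.
  by rewrite !mxE /= mul0r addr0.
by rewrite !mxE /= mul0r addr0 mulrDr.
Qed.

Lemma gray_linear_code N (C : {set 'rV[Z4u]_N}) :
  linear_code C -> linear_code [set gray c | c in C].
Proof.
case=> C0 CD CZ; split.
- by rewrite -gray0; apply: imset_f.
- by move=> _ _ /imsetP[x xC ->] /imsetP[y yC ->]; rewrite -grayD; apply/imset_f/CD.
- by move=> a _ /imsetP[c cC ->]; rewrite grayZ; apply/imset_f/CZ.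
Qed.

Definition z4u_sum (x : Z4u) : 'Z_4 := x.1 + x.2.

Lemma z4u_sum_big N (F : 'I_N -> Z4u) : z4u_sum (\sum_i F i) = \sum_i z4u_sum (F i).
Proof. by apply: big_morph => [[a b] [c d]|]; rewrite /z4u_sum /=; ring. Qed.

Lemma euclid_gray_conj N (c z : 'rV[Z4u]_N) :
  euclid (gray c) (gray (map_mx z4u_conj z)) = z4u_sum (euclid c z).
Proof.
rewrite euclid_row_mx /euclid z4u_sum_big -big_split /=.
by apply: eq_bigr => i _; rewrite !mxE /z4u_sum /=; ring.
Qed.

Lemma z4u_sum_eq0 (x : Z4u) : z4u_sum x = 0 -> z4u_sum (uZ4u * x) = 0 -> x = 0.
Proof.
case: x => a b; rewrite /z4u_sum /GRing.mul /= !mul0r mul1r !add0r => + a0.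
by rewrite a0 add0r => ->.
Qed.

Lemma dual_code_gray N (C : {set 'rV[Z4u]_N}) : linear_code C ->
  dual_code [set gray c | c in C] = [set gray (map_mx z4u_conj z) | z in dual_code C].
Proof.
case=> _ _ CZ; apply/setP => y; apply/idP/imsetP.
- rewrite inE => /forall_inP y_dual.
  have y_orth c : c \in C -> z4u_sum (euclid c (map_mx z4u_conj (ungray y))) = 0.
    move=> cC; rewrite -euclid_gray_conj map_mx_z4u_conjK ungrayK.
    exact/eqP/y_dual/imset_f.
  exists (map_mx z4u_conj (ungray y)); last by rewrite map_mx_z4u_conjK ungrayK.
  rewrite inE; apply/forall_inP => c cC; apply/eqP/z4u_sum_eq0; first exact: y_orth.
  by rewrite -euclidZl; apply/y_orth/CZ.
- move=> [z z_dual ->]; rewrite inE; apply/forall_inP => _ /imsetP[c cC ->].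
  rewrite euclid_gray_conj; move: z_dual; rewrite inE => /forall_inP/(_ c cC)/eqP ->.
  by rewrite /z4u_sum addr0.
Qed.

Lemma formally_self_dual_gray N (C : {set 'rV[Z4u]_N}) :
  formally_self_dual (@leeZ4u_vec N) C ->
  formally_self_dual (@leeZ4_vec (N + N)) [set gray c | c in C].
Proof.
case=> C_lin C_wt; split; first exact: gray_linear_code.
have conj_inj := can_inj (@map_mx_z4u_conjK 1 N).
have gray_inj := can_inj (@grayK N).
rewrite dual_code_gray // (weight_enum_imset _ gray_inj (@leeZ4_vec_gray N)) C_wt.
apply/esym/weight_enum_imset; first exact: inj_comp gray_inj conj_inj.
by move=> v; rewrite leeZ4_vec_gray leeZ4u_vec_conj.
Qed.

Theorem corollary5p3 (n : nat) (A : 'M[Z4u]_n) :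
  (A^T = A \/ circulant A) ->
  let C := gen_code (row_mx (1%:M : 'M[Z4u]_n) A) in
  formally_self_dual (@leeZ4u_vec (n + n)) C /\
  formally_self_dual (@leeZ4_vec ((n + n) + (n + n))) [set gray c | c in C].
Proof.
move=> A_sym_or_circ C.
have [s [s_invol AP]] : exists s : 'S_n,
    (s * s = 1)%g /\ A *m perm_mx s = perm_mx s *m A^T.
  case: A_sym_or_circ => [AT | cA].
    by exists 1%g; rewrite mulg1 perm_mx1 mulmx1 mul1mx AT.
  by exists (rev_perm n); rewrite rev_permK circulant_mul_rev_perm.
have P_invol : perm_mx s *m perm_mx s = 1%:M :> 'M[Z4u]_n.
  by rewrite -perm_mxM s_invol perm_mx1.
have C_fsd : formally_self_dual (@leeZ4u_vec (n + n)) C.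
  exact: (formally_self_dual_systematic P_invol AP (@leeZ4u_vec_dual_twist n s)).
by split; last exact: formally_self_dual_gray.
Qed.
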